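(* Let $N\ge1$, $\mathbf{S}=(\mathsf{SNR}_{s,r},\mathsf{SNR}_{s,1},\dots,\mathsf{SNR}_{s,N},\mathsf{SNR}_{r,1},\dots,\mathsf{SNR}_{r,N})\in[0,\infty)^{2N+1}$, $\rho\in[0,1]$, $\mathsf{C}(x)=\tfrac12\log(1+x)$, and for $j=1,\dots,N$ $$f_j(\rho,\mathbf{S})=\mathsf{SNR}_{s,j}+\mathsf{SNR}_{r,j}+2\rho\sqrt{\mathsf{SNR}_{s,j}\mathsf{SNR}_{r,j}},\qquad g^*_j(\rho,\mathbf{S})=(1-\rho^2)\,\mathsf{SNR}_{s,r},$$ $$R_{DF}(\rho,\mathbf{S})=\min_{1\le j\le N}\min\big(\mathsf{C}(f_j(\rho,\mathbf{S})),\mathsf{C}(g^*_j(\rho,\mathbf{S}))\big).$$ Then $R_{DF}(\rho,\mathbf{S})$ is concave in $\rho\in[0,1]$ for fixed $\mathbf{S}$, concave in $\mathbf{S}\in[0,\infty)^{2N+1}$ for fixed $\rho$, and the map $(t,\mathbf{S})\mapsto R_{DF}(\sqrt t,\mathbf{S})$ is quasi-concave on $[0,1]\times[0,\infty)^{2N+1}$ (i.e., quasi-concave in $(\rho^2,\mathbf{S})$).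
   Context: $R_{DF}$ is the decode-forward rate expression for a real AWGN multicast relay channel with source $s$, relay $r$, destinations $1,\dots,N$, link SNRs $\mathsf{SNR}_{u,v}\ge0$ and source–relay input correlation coefficient $\rho$. A function $F$ on a convex set is quasi-concave if $F(\lambda x_1+(1-\lambda)x_2)\ge\min(F(x_1),F(x_2))$ for all $x_1,x_2$ and $\lambda\in[0,1]$. *)

From HB Require Import structures.
From mathcomp Require Import all_boot all_order all_algebra.
From mathcomp Require Import all_classical all_reals all_analysis.
Set Implicit Arguments. Unset Strict Implicit. Unset Printing Implicit Defensive.
Import Order.TTheory GRing.Theory Num.Theory.
Local Open Scope ring_scope.

(* The SNR vector S = (SNR_{s,r}, SNR_{s,1..N}, SNR_{r,1..N}) in R^{2N+1}. *)
Record snrvec (R : realType) (N : nat) := SNRVec {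
  snr_sr : R;
  snr_s  : 'I_N -> R;
  snr_r  : 'I_N -> R
}.

Definition snr_nonneg (R : realType) (N : nat) (S : snrvec R N) : Prop :=
  0 <= snr_sr S /\ (forall j, 0 <= snr_s S j) /\ (forall j, 0 <= snr_r S j).

Definition snr_comb (R : realType) (N : nat) (l : R) (S1 S2 : snrvec R N)
  : snrvec R N :=
  SNRVec (l * snr_sr S1 + (1 - l) * snr_sr S2)
         (fun j => l * snr_s S1 j + (1 - l) * snr_s S2 j)
         (fun j => l * snr_r S1 j + (1 - l) * snr_r S2 j).

Definition Ccap (R : realType) (x : R) : R := ln (1 + x) / 2.

Definition f_j (R : realType) (N : nat) (rho : R) (S : snrvec R N) (j : 'I_N) : R :=
  snr_s S j + snr_r S j + 2 * rho * Num.sqrt (snr_s S j * snr_r S j).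

Definition gstar_j (R : realType) (N : nat) (rho : R) (S : snrvec R N) (j : 'I_N) : R :=
  (1 - rho ^+ 2) * snr_sr S.

(* R_DF = min_{1<=j<=N} min(C(f_j), C(gstar_j)).  The big-min needs a seed;
   we seed it with C(gstar) (which does not depend on j), so for N >= 1 this is
   exactly the minimum over j. *)
Definition R_DF (R : realType) (N : nat) (rho : R) (S : snrvec R N) : R :=
  \big[Num.min/Ccap ((1 - rho ^+ 2) * snr_sr S)]_(j < N)
     Num.min (Ccap (f_j rho S j)) (Ccap (gstar_j rho S j)).

(* R_DF is a minimum of terms C(g) and C(f_j) with C concave and nondecreasing, so
   concavity (resp. quasi-concavity) of R_DF reduces to concavity (resp. quasi-concavity)
   of the arguments g and f_j.  In rho, f_j is affine and 1 - rho^2 is concave; in S,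
   f_j is concave because the geometric mean sqrt (s r) is.  In (t, S), (1 - t) SNR_sr is
   a product of nonnegative affine maps, whose square root is a geometric mean, and the
   superlevel sets of x + y + 2 sqrt (t x y) are convex: where x + y < c they are the
   epigraph in t of (c - x - y)^2 / (4 x y), a convex function of (x, y), whose convexity
   is used through its tangent planes. *)

From HB Require Import structures.
From mathcomp Require Import all_boot all_order all_algebra.
From mathcomp Require Import all_classical all_reals all_analysis.
From mathcomp Require Import ring lra.
Import Order.TTheory GRing.Theory Num.Theory.
Local Open Scope ring_scope.
Set Implicit Arguments. Unset Strict Implicit.

Section ConvexCombinations.
Variable R : realFieldType.

Lemma conv_ler (l a1 a2 b1 b2 : R) : 0 <= l <= 1 -> a1 <= b1 -> a2 <= b2 ->
  l * a1 + (1 - l) * a2 <= l * b1 + (1 - l) * b2.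
Proof. by move=> /andP[l0 l1] h1 h2; apply: lerD; apply: ler_wpM2l => //; lra. Qed.

Lemma mul_convE (l a1 a2 b1 b2 : R) :
  (l * a1 + (1 - l) * a2) * (l * b1 + (1 - l) * b2) =
  l ^+ 2 * (a1 * b1) + (1 - l) ^+ 2 * (a2 * b2) + l * (1 - l) * (a1 * b2 + a2 * b1).
Proof. by ring. Qed.

Lemma sqr_conv_le (l a1 a2 : R) : 0 <= l <= 1 ->
  (l * a1 + (1 - l) * a2) ^+ 2 <= l * a1 ^+ 2 + (1 - l) * a2 ^+ 2.
Proof.
move=> /andP[l0 l1]; rewrite -subr_ge0.
have -> : l * a1 ^+ 2 + (1 - l) * a2 ^+ 2 - (l * a1 + (1 - l) * a2) ^+ 2
  = l * (1 - l) * (a1 - a2) ^+ 2 by ring.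
by rewrite mulr_ge0 ?sqr_ge0 // mulr_ge0 //; lra.
Qed.

End ConvexCombinations.

Section GeometricMean.
Variable R : rcfType.

Lemma sqrt_mul_concave (l s1 s2 r1 r2 : R) : 0 <= l <= 1 ->
  0 <= s1 -> 0 <= s2 -> 0 <= r1 -> 0 <= r2 ->
  l * Num.sqrt (s1 * r1) + (1 - l) * Num.sqrt (s2 * r2) <=
  Num.sqrt ((l * s1 + (1 - l) * s2) * (l * r1 + (1 - l) * r2)).
Proof.
move=> /andP[l0 l1] hs1 hs2 hr1 hr2.
set a := Num.sqrt (s1 * r1); set b := Num.sqrt (s2 * r2).
have ha : 0 <= a := sqrtr_ge0 _.
have hb : 0 <= b := sqrtr_ge0 _.
have ea : a ^+ 2 = s1 * r1 by rewrite sqr_sqrtr // mulr_ge0.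
have eb : b ^+ 2 = s2 * r2 by rewrite sqr_sqrtr // mulr_ge0.
have amgm : 2 * (a * b) <= s1 * r2 + s2 * r1.
  rewrite -ler_sqr ?nnegrE ?addr_ge0 ?mulr_ge0 //.
  have -> : (2 * (a * b)) ^+ 2 = 4 * (a ^+ 2 * b ^+ 2) by ring.
  rewrite ea eb -subr_ge0.
  have -> : (s1 * r2 + s2 * r1) ^+ 2 - 4 * (s1 * r1 * (s2 * r2))
    = (s1 * r2 - s2 * r1) ^+ 2 by ring.
  exact: sqr_ge0.
have hL : 0 <= l * a + (1 - l) * b by rewrite addr_ge0 ?mulr_ge0 //; lra.
have hP : 0 <= (l * s1 + (1 - l) * s2) * (l * r1 + (1 - l) * r2).
  by rewrite mulr_ge0 ?addr_ge0 ?mulr_ge0 //; lra.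
rewrite -(ger0_norm hL) -sqrtr_sqr ler_sqrt // mul_convE.
have -> : (l * a + (1 - l) * b) ^+ 2 =
  l ^+ 2 * a ^+ 2 + (1 - l) ^+ 2 * b ^+ 2 + l * (1 - l) * (2 * (a * b)) by ring.
rewrite ea eb lerD2l; apply: ler_wpM2l amgm.
by rewrite mulr_ge0 //; lra.
Qed.

Lemma mul_quasiconcave (l p1 p2 a1 a2 : R) : 0 <= l <= 1 ->
  0 <= p1 -> 0 <= p2 -> 0 <= a1 -> 0 <= a2 ->
  Num.min (p1 * a1) (p2 * a2) <= (l * p1 + (1 - l) * p2) * (l * a1 + (1 - l) * a2).
Proof.
move=> hl hp1 hp2 ha1 ha2; set m := Num.min _ _.
have hm : 0 <= m by rewrite le_min !mulr_ge0.
rewrite -ler_sqrt ?mulr_ge0 ?addr_ge0 ?mulr_ge0 //; try by case/andP: hl; lra.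
apply: le_trans (sqrt_mul_concave hl hp1 hp2 ha1 ha2).
have -> : Num.sqrt m = l * Num.sqrt m + (1 - l) * Num.sqrt m by ring.
by apply: conv_ler => //; rewrite ler_sqrt ?mulr_ge0 // ge_min lexx ?orbT.
Qed.

End GeometricMean.

Section Tangent.
Variable R : realFieldType.
Implicit Types c x y X Y : R.

Lemma prod_sub_le_sqr x y X Y : 0 <= X -> 0 <= Y -> X <= x -> Y <= y ->
  x * y * ((x - X) * (y - Y)) <= (x * y - X * Y) ^+ 2.
Proof.
move=> hX hY hx hy.
have : 0 <= (x - X) * (y - Y) by apply: mulr_ge0; lra.
have : 0 <= X * (y - Y) by apply: mulr_ge0; lra.
have : 0 <= Y * (x - X) by apply: mulr_ge0; lra.
nra.
Qed.

Lemma prod_sub_le_sqr_rev x y X Y : 0 <= x -> 0 <= y -> x <= X -> y <= Y ->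
  x * y * ((x - X) * (y - Y)) <= (x * y - X * Y) ^+ 2.
Proof.
move=> hx hy hX hY.
have : 0 <= (x - X) * (y - Y) by apply: mulr_le0; lra.
have : 0 <= x * (Y - y) by apply: mulr_ge0; lra.
have : 0 <= y * (X - x) by apply: mulr_ge0; lra.
nra.
Qed.

Lemma mul_le_sum_cross x y X Y : 0 <= x -> 0 <= y -> 0 <= X -> 0 <= Y ->
  X + Y <= x + y -> X * Y <= Y * x + X * y.
Proof. by move=> *; have [] := lerP X Y => ?; nra. Qed.

(* [(c - X - Y) * tangent c X Y x y / (X Y)^2] is the tangent plane at [(X, Y)] of
   [(c - x - y)^2 / (x y)]; it is affine in [(x, y)]. *)
Definition tangent c X Y x y :=
  (c - X - Y) * (X * Y) + 2 * (X * Y) * (c - x - y) - (c - X - Y) * (Y * x + X * y).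

Lemma tangent_nonpos c x y X Y : 0 <= x -> 0 <= y -> 0 <= X -> 0 <= Y ->
  c - x - y <= 0 -> 0 <= c - X - Y -> (c - X - Y) * tangent c X Y x y <= 0.
Proof.
move=> hx hy hX hY hc hV.
have := mul_le_sum_cross hx hy hX hY ltac:(lra).
have : 0 <= X * Y by apply: mulr_ge0.
by move=> *; apply: mulr_ge0_le0 => //; rewrite /tangent; nra.
Qed.

Lemma tangent_le_sqr c x y X Y : 0 <= x -> 0 <= y -> 0 <= X -> 0 <= Y ->
  0 <= c - X - Y ->
  x * y * ((c - X - Y) * tangent c X Y x y) <= (c - x - y) ^+ 2 * (X * Y) ^+ 2.
Proof.
move=> hx hy hX hY hV; set V := c - X - Y.
set u := (x + y - X - Y) * (X * Y); set w := V * (x * y - X * Y).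
rewrite -subr_ge0.
have -> : (c - x - y) ^+ 2 * (X * Y) ^+ 2 - x * y * (V * tangent c X Y x y)
    = (u + w) ^+ 2 - V ^+ 2 * (x * y * ((x - X) * (y - Y))).
  by rewrite /u /w /V /tangent; ring.
rewrite subr_ge0.
have hxy : 0 <= x * y by apply: mulr_ge0.
have hXY : 0 <= X * Y by apply: mulr_ge0.
(* when [(x, y) - (X, Y)] is comonotone, [u] and [w] have the same sign *)
have comonotone : 0 <= (x + y - X - Y) * (x * y - X * Y) ->
    x * y * ((x - X) * (y - Y)) <= (x * y - X * Y) ^+ 2 ->
    V ^+ 2 * (x * y * ((x - X) * (y - Y))) <= (u + w) ^+ 2.
  move=> hsign hsq; apply: le_trans (_ : w ^+ 2 <= _); last first.
    have : 0 <= u * w.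
      have -> : u * w = X * Y * V * ((x + y - X - Y) * (x * y - X * Y)).
        by rewrite /u /w; ring.
      by apply: mulr_ge0 => //; apply: mulr_ge0.
    nra.
  by rewrite /w exprMn ler_wpM2l ?sqr_ge0.
have [hxX|hxX] := lerP X x; have [hyY|hyY] := lerP Y y.
- apply: comonotone; last exact: prod_sub_le_sqr.
  by rewrite mulr_ge0 ?subr_ge0 ?ler_pM //; lra.
- apply: le_trans (sqr_ge0 _); rewrite mulr_ge0_le0 ?sqr_ge0 // mulr_ge0_le0 //.
  by rewrite mulr_ge0_le0 //; lra.
- apply: le_trans (sqr_ge0 _); rewrite mulr_ge0_le0 ?sqr_ge0 // mulr_ge0_le0 //.
  by rewrite mulr_le0_ge0 //; lra.
apply: comonotone; last by apply: prod_sub_le_sqr_rev; lra.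
by rewrite mulr_le0 ?subr_le0 ?ler_pM //; lra.
Qed.

End Tangent.

Section SnrSum.
Variable R : rcfType.
Implicit Types c t x y X Y : R.

Definition snr_sum t x y := x + y + 2 * Num.sqrt t * Num.sqrt (x * y).

Lemma addr_le_snr_sum t x y : x + y <= snr_sum t x y.
Proof. by rewrite /snr_sum lerDl !mulr_ge0 ?sqrtr_ge0. Qed.

Lemma snr_sum_mul0 t x y : x * y = 0 -> snr_sum t x y = x + y.
Proof. by move=> xy0; rewrite /snr_sum xy0 sqrtr0 mulr0 addr0. Qed.

Lemma sqr_snr_sum_cross t x y : 0 <= t -> 0 <= x * y ->
  (2 * Num.sqrt t * Num.sqrt (x * y)) ^+ 2 = 4 * t * (x * y).
Proof. by move=> ht hxy; rewrite !exprMn !sqr_sqrtr //; ring. Qed.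

Lemma sqr_deficit_le c t x y : 0 <= t -> 0 <= x * y -> 0 <= c - x - y ->
  c <= snr_sum t x y -> (c - x - y) ^+ 2 <= 4 * t * (x * y).
Proof.
move=> ht hxy hd hc; rewrite -sqr_snr_sum_cross // ler_sqr ?nnegrE ?mulr_ge0 ?sqrtr_ge0 //.
by move: hc; rewrite /snr_sum; lra.
Qed.

Lemma le_snr_sum_of_sqr c t x y : 0 <= t -> 0 <= x * y ->
  (c - x - y) ^+ 2 <= 4 * t * (x * y) -> c <= snr_sum t x y.
Proof.
move=> ht hxy; rewrite -sqr_snr_sum_cross // -ler_sqrt ?sqr_ge0 // !sqrtr_sqr.
rewrite [`|2 * _ * _|]ger0_norm ?mulr_ge0 ?sqrtr_ge0 // /snr_sum => h.
by have := ler_norm (c - x - y); lra.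
Qed.

Lemma tangent_le c t x y X Y : 0 <= t -> 0 <= x -> 0 <= y -> 0 <= X -> 0 <= Y ->
  0 <= c - X - Y -> 0 < X * Y -> c <= snr_sum t x y ->
  (c - X - Y) * tangent c X Y x y <= 4 * t * (X * Y) ^+ 2.
Proof.
move=> ht hx hy hX hY hV hXY hc.
have hxy : 0 <= x * y by apply: mulr_ge0.
have [hd|hd] := lerP (c - x - y) 0.
  apply: le_trans (tangent_nonpos hx hy hX hY hd hV) _.
  by rewrite !mulr_ge0 ?sqr_ge0.
have hsq := sqr_deficit_le ht hxy (ltW hd) hc.
have hxy0 : 0 < x * y.
  rewrite lt_def hxy andbT; apply: contraTneq hsq => ->.
  by rewrite mulr0 -ltNge exprn_gt0.
rewrite -(ler_pM2l hxy0); apply: le_trans (tangent_le_sqr hx hy hX hY hV) _.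
have -> : x * y * (4 * t * (X * Y) ^+ 2) = 4 * t * (x * y) * (X * Y) ^+ 2 by ring.
by rewrite ler_wpM2r ?sqr_ge0.
Qed.

Lemma weighted_deficit_nonpos c l t x y : 0 <= l -> 0 <= x * y ->
  c <= snr_sum t x y -> l ^+ 2 * (x * y) <= 0 -> l * (c - x - y) <= 0.
Proof.
move=> hl hxy hc hlxy; have [->|l0] := eqVneq l 0; first by rewrite mul0r.
have xy0 : x * y = 0.
  have l2 : 0 < l ^+ 2 by rewrite exprn_gt0 // lt_def l0.
  by apply/eqP; rewrite eq_le hxy andbT -(pmulr_rle0 _ l2).
by rewrite mulr_ge0_le0 //; move: hc; rewrite snr_sum_mul0 //; lra.
Qed.

(* If the combined [x y] vanished, each point of positive weight would have [x y = 0],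
   hence [c <= x + y]. *)
Lemma snr_sum_conv_mul_gt0 c l t1 t2 x1 x2 y1 y2 : 0 <= l <= 1 ->
  0 <= x1 -> 0 <= x2 -> 0 <= y1 -> 0 <= y2 ->
  c <= snr_sum t1 x1 y1 -> c <= snr_sum t2 x2 y2 ->
  0 < c - (l * x1 + (1 - l) * x2) - (l * y1 + (1 - l) * y2) ->
  0 < (l * x1 + (1 - l) * x2) * (l * y1 + (1 - l) * y2).
Proof.
move=> /andP[l0 l1] hx1 hx2 hy1 hy2 hc1 hc2 hV.
have hxy1 : 0 <= x1 * y1 by apply: mulr_ge0.
have hxy2 : 0 <= x2 * y2 by apply: mulr_ge0.
have h1 : 0 <= l ^+ 2 * (x1 * y1) by rewrite mulr_ge0 ?sqr_ge0.
have h2 : 0 <= (1 - l) ^+ 2 * (x2 * y2) by rewrite mulr_ge0 ?sqr_ge0.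
have hcross : 0 <= l * (1 - l) * (x1 * y2 + x2 * y1).
  by apply: mulr_ge0; [apply: mulr_ge0; lra | rewrite addr_ge0 ?mulr_ge0].
rewrite lt_def mul_convE !addr_ge0 // andbT.
rewrite paddr_eq0 ?addr_ge0 // paddr_eq0 //.
apply/negP => /andP[/andP[/eqP z1 /eqP z2] _].
have d1 : l * (c - x1 - y1) <= 0.
  by apply: (weighted_deficit_nonpos l0 hxy1 hc1); rewrite z1.
have d2 : (1 - l) * (c - x2 - y2) <= 0.
  by apply: (weighted_deficit_nonpos _ hxy2 hc2); rewrite ?z2 //; lra.
have := lerD d1 d2; rewrite addr0.
have -> : l * (c - x1 - y1) + (1 - l) * (c - x2 - y2)
  = c - (l * x1 + (1 - l) * x2) - (l * y1 + (1 - l) * y2) by ring.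
by rewrite leNgt hV.
Qed.

(* The tangents of the convex function [(c - x - y)^2 / (x y)] at the combined point
   average to its value there. *)
Lemma snr_sum_quasiconcave c l t1 t2 x1 x2 y1 y2 : 0 <= l <= 1 ->
  0 <= t1 -> 0 <= t2 -> 0 <= x1 -> 0 <= x2 -> 0 <= y1 -> 0 <= y2 ->
  c <= snr_sum t1 x1 y1 -> c <= snr_sum t2 x2 y2 ->
  c <= snr_sum (l * t1 + (1 - l) * t2)
         (l * x1 + (1 - l) * x2) (l * y1 + (1 - l) * y2).
Proof.
move=> hl ht1 ht2 hx1 hx2 hy1 hy2 hc1 hc2; have /andP[l0 l1] := hl.
have [hV|hV] := lerP (c - (l * x1 + (1 - l) * x2) - (l * y1 + (1 - l) * y2)) 0.
  by apply: le_trans (addr_le_snr_sum _ _ _); lra.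
have hXY0 := snr_sum_conv_mul_gt0 hl hx1 hx2 hy1 hy2 hc1 hc2 hV.
set X := l * x1 + _ in hV hXY0 *; set Y := l * y1 + _ in hV hXY0 *.
set T := l * t1 + _.
have hX : 0 <= X by rewrite addr_ge0 ?mulr_ge0 //; lra.
have hY : 0 <= Y by rewrite addr_ge0 ?mulr_ge0 //; lra.
have hT : 0 <= T by rewrite addr_ge0 ?mulr_ge0 //; lra.
have := conv_ler hl (tangent_le ht1 hx1 hy1 hX hY (ltW hV) hXY0 hc1)
  (tangent_le ht2 hx2 hy2 hX hY (ltW hV) hXY0 hc2).
have -> : l * ((c - X - Y) * tangent c X Y x1 y1) +
    (1 - l) * ((c - X - Y) * tangent c X Y x2 y2) = X * Y * (c - X - Y) ^+ 2.
  by rewrite /tangent /X /Y; ring.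
have -> : l * (4 * t1 * (X * Y) ^+ 2) + (1 - l) * (4 * t2 * (X * Y) ^+ 2)
    = X * Y * (4 * T * (X * Y)) by rewrite /T; ring.
by rewrite ler_pM2l //; apply: le_snr_sum_of_sqr => //; rewrite ltW.
Qed.

End SnrSum.

Section Capacity.
Variable R : realType.
Implicit Types l x y z : R.

Lemma ler_Ccap x y : 0 <= x -> x <= y -> Ccap x <= Ccap y.
Proof.
move=> hx hxy; rewrite /Ccap ler_wpM2r ?invr_ge0 //.
by rewrite ler_ln ?posrE; lra.
Qed.

Lemma Ccap_concave l x y : 0 <= l <= 1 -> 0 <= x -> 0 <= y ->
  l * Ccap x + (1 - l) * Ccap y <= Ccap (l * x + (1 - l) * y).
Proof.
move=> /andP[l0 l1] hx hy.
have hln : l * ln (1 + x) + (1 - l) * ln (1 + y) <= ln (l * (1 + x) + (1 - l) * (1 + y)).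
  by have := @concave_ln R (Itv01 l0 l1) (1 + x) (1 + y) ltac:(lra) ltac:(lra);
    rewrite !convRE.
have e : l * (1 + x) + (1 - l) * (1 + y) = 1 + (l * x + (1 - l) * y) by ring.
rewrite e in hln.
by rewrite /Ccap !mulrA -mulrDl ler_wpM2r.
Qed.

Lemma Ccap_conv_le l x y z : 0 <= l <= 1 -> 0 <= x -> 0 <= y ->
  l * x + (1 - l) * y <= z -> l * Ccap x + (1 - l) * Ccap y <= Ccap z.
Proof.
move=> hl hx hy hz; apply: le_trans (Ccap_concave hl hx hy) (ler_Ccap _ hz).
by case/andP: hl => l0 l1; rewrite addr_ge0 ?mulr_ge0 //; lra.
Qed.

Lemma Ccap_min_le x y z : 0 <= x -> 0 <= y -> Num.min x y <= z ->
  Num.min (Ccap x) (Ccap y) <= Ccap z.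
Proof.
move=> hx hy; rewrite !ge_min => /orP[] h.
  by rewrite (ler_Ccap hx h).
by rewrite (ler_Ccap hy h) orbT.
Qed.

End Capacity.

Section DecodeForwardRate.
Variables (R : realType) (N : nat).
Implicit Types (rho : R) (S : snrvec R N).

Lemma R_DF_le_gstar rho S : R_DF rho S <= Ccap ((1 - rho ^+ 2) * snr_sr S).
Proof. exact: bigmin_le_id. Qed.

Lemma R_DF_le_f rho S j : R_DF rho S <= Ccap (f_j rho S j).
Proof. by apply: le_trans (bigmin_le _ j _) _; rewrite ge_min lexx. Qed.

Lemma le_R_DF (m : R) rho S : m <= Ccap ((1 - rho ^+ 2) * snr_sr S) ->
  (forall j, m <= Ccap (f_j rho S j)) -> m <= R_DF rho S.
Proof. by move=> hg hf; apply: le_bigmin => // j _; rewrite le_min hf. Qed.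

Lemma R_DF_conv_le (l : R) rho1 rho2 rho S1 S2 S : 0 <= l <= 1 ->
  l * Ccap ((1 - rho1 ^+ 2) * snr_sr S1) + (1 - l) * Ccap ((1 - rho2 ^+ 2) * snr_sr S2)
    <= Ccap ((1 - rho ^+ 2) * snr_sr S) ->
  (forall j, l * Ccap (f_j rho1 S1 j) + (1 - l) * Ccap (f_j rho2 S2 j)
    <= Ccap (f_j rho S j)) ->
  l * R_DF rho1 S1 + (1 - l) * R_DF rho2 S2 <= R_DF rho S.
Proof.
move=> hl hg hf; apply: le_R_DF.
  exact: le_trans (conv_ler hl (R_DF_le_gstar _ _) (R_DF_le_gstar _ _)) hg.
by move=> j; apply: le_trans (conv_ler hl (R_DF_le_f _ _ j) (R_DF_le_f _ _ j)) (hf j).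
Qed.

Lemma R_DF_min_le rho1 rho2 rho S1 S2 S :
  Num.min (Ccap ((1 - rho1 ^+ 2) * snr_sr S1)) (Ccap ((1 - rho2 ^+ 2) * snr_sr S2))
    <= Ccap ((1 - rho ^+ 2) * snr_sr S) ->
  (forall j, Num.min (Ccap (f_j rho1 S1 j)) (Ccap (f_j rho2 S2 j)) <= Ccap (f_j rho S j)) ->
  Num.min (R_DF rho1 S1) (R_DF rho2 S2) <= R_DF rho S.
Proof.
move=> hg hf; apply: le_R_DF.
  exact: le_trans (le_min2 (R_DF_le_gstar _ _) (R_DF_le_gstar _ _)) hg.
by move=> j; apply: le_trans (le_min2 (R_DF_le_f _ _ j) (R_DF_le_f _ _ j)) (hf j).
Qed.

Lemma gstar_ge0 rho S : 0 <= rho <= 1 -> snr_nonneg S -> 0 <= (1 - rho ^+ 2) * snr_sr S.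
Proof. by move=> /andP[r0 r1] [ha _]; rewrite mulr_ge0 //; nra. Qed.

Lemma f_j_ge0 rho S j : 0 <= rho -> snr_nonneg S -> 0 <= f_j rho S j.
Proof. by move=> hr [_ [hs hr']]; rewrite /f_j !addr_ge0 ?mulr_ge0 ?sqrtr_ge0. Qed.

Lemma f_j_convE (l rho1 rho2 : R) S j :
  f_j (l * rho1 + (1 - l) * rho2) S j = l * f_j rho1 S j + (1 - l) * f_j rho2 S j.
Proof. by rewrite /f_j; ring. Qed.

End DecodeForwardRate.

Section Theorem2Parts.
Variables (R : realType) (N : nat).

Lemma R_DF_concave_rho (S : snrvec R N) : snr_nonneg S ->
  forall (rho1 rho2 l : R), 0 <= rho1 <= 1 -> 0 <= rho2 <= 1 -> 0 <= l <= 1 ->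
    l * R_DF rho1 S + (1 - l) * R_DF rho2 S <= R_DF (l * rho1 + (1 - l) * rho2) S.
Proof.
move=> hS rho1 rho2 l h1 h2 hl; apply: R_DF_conv_le => // [|j].
  apply: Ccap_conv_le (gstar_ge0 h1 hS) (gstar_ge0 h2 hS) _ => //.
  have -> : l * ((1 - rho1 ^+ 2) * snr_sr S) + (1 - l) * ((1 - rho2 ^+ 2) * snr_sr S)
    = (1 - (l * rho1 ^+ 2 + (1 - l) * rho2 ^+ 2)) * snr_sr S by ring.
  by case: hS => ha _; rewrite ler_wpM2r // lerB // sqr_conv_le.
case/andP: h1 => r1 _; case/andP: h2 => r2 _.
by apply: Ccap_conv_le; rewrite ?f_j_convE ?f_j_ge0.
Qed.

Lemma R_DF_concave_snr (rho : R) : 0 <= rho <= 1 ->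
  forall (S1 S2 : snrvec R N) (l : R), snr_nonneg S1 -> snr_nonneg S2 -> 0 <= l <= 1 ->
    l * R_DF rho S1 + (1 - l) * R_DF rho S2 <= R_DF rho (snr_comb l S1 S2).
Proof.
move=> hr S1 S2 l hS1 hS2 hl; have /andP[r0 _] := hr.
apply: R_DF_conv_le => // [|j].
  apply: Ccap_conv_le (gstar_ge0 hr hS1) (gstar_ge0 hr hS2) _ => //=.
  by rewrite le_eqVlt predU1l //; ring.
apply: Ccap_conv_le; rewrite ?f_j_ge0 //.
have [_ [hs1 hr1]] := hS1; have [_ [hs2 hr2]] := hS2.
have := sqrt_mul_concave hl (hs1 j) (hs2 j) (hr1 j) (hr2 j).
have : 0 <= 2 * rho by rewrite mulr_ge0.
rewrite /f_j /=; nra.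
Qed.

Lemma R_DF_sqrt_quasiconcave (t1 t2 : R) (S1 S2 : snrvec R N) (l : R) :
  0 <= t1 <= 1 -> 0 <= t2 <= 1 -> snr_nonneg S1 -> snr_nonneg S2 -> 0 <= l <= 1 ->
  Num.min (R_DF (Num.sqrt t1) S1) (R_DF (Num.sqrt t2) S2)
    <= R_DF (Num.sqrt (l * t1 + (1 - l) * t2)) (snr_comb l S1 S2).
Proof.
move=> /andP[t10 t11] /andP[t20 t21] hS1 hS2 hl; have /andP[l0 l1] := hl.
have [ha1 [hs1 hr1]] := hS1; have [ha2 [hs2 hr2]] := hS2.
have hT : 0 <= l * t1 + (1 - l) * t2 by rewrite addr_ge0 ?mulr_ge0 //; lra.
apply: R_DF_min_le => [|j].
  rewrite !sqr_sqrtr //=.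
  have -> : 1 - (l * t1 + (1 - l) * t2) = l * (1 - t1) + (1 - l) * (1 - t2) by ring.
  by apply: Ccap_min_le; rewrite ?mul_quasiconcave ?mulr_ge0 ?subr_ge0.
apply: Ccap_min_le; rewrite ?f_j_ge0 ?sqrtr_ge0 //.
by apply: (snr_sum_quasiconcave hl); rewrite ?ge_min ?lexx ?orbT.
Qed.

End Theorem2Parts.

Unset Implicit Arguments.
Set Strict Implicit.

Theorem theorem2 (R : realType) (N : nat) (hN : (1 <= N)%N) :
  (* (i) concave in rho on [0,1] for fixed S *)
  (forall (S : snrvec R N), snr_nonneg S ->
     forall (rho1 rho2 l : R), 0 <= rho1 <= 1 -> 0 <= rho2 <= 1 -> 0 <= l <= 1 ->
       l * R_DF rho1 S + (1 - l) * R_DF rho2 S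
         <= R_DF (l * rho1 + (1 - l) * rho2) S) /\
  (* (ii) concave in S on [0,oo)^{2N+1} for fixed rho *)
  (forall (rho : R), 0 <= rho <= 1 ->
     forall (S1 S2 : snrvec R N) (l : R), snr_nonneg S1 -> snr_nonneg S2 ->
       0 <= l <= 1 ->
       l * R_DF rho S1 + (1 - l) * R_DF rho S2 <= R_DF rho (snr_comb l S1 S2)) /\
  (* (iii) (t,S) |-> R_DF(sqrt t, S) quasi-concave on [0,1] x [0,oo)^{2N+1} *)
  (forall (t1 t2 : R) (S1 S2 : snrvec R N) (l : R),
     0 <= t1 <= 1 -> 0 <= t2 <= 1 -> snr_nonneg S1 -> snr_nonneg S2 ->
     0 <= l <= 1 ->
     Num.min (R_DF (Num.sqrt t1) S1) (R_DF (Num.sqrt t2) S2)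
       <= R_DF (Num.sqrt (l * t1 + (1 - l) * t2)) (snr_comb l S1 S2)).
Proof.
split; first exact: R_DF_concave_rho.
split; first exact: R_DF_concave_snr.
exact: R_DF_sqrt_quasiconcave.
Qed.
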